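(* Let $q\in(0,\tfrac12)$ and $T,S\in\mathbb{R}$, and set $$P_{T,S}(x)=(T+S-1)x^3+\big(1-T-2S+q(S-1-T)\big)x^2+\big(S+q(T-S)\big)x,$$ $X=(1-q)(T-1)+qS$ and $Y=q(T-1)+(1-q)S$. Then $P_{T,S}$ has exactly three distinct roots in $[0,1]$ if and only if $$X<0\quad\text{and}\quad -\frac{X^2}{4q}-q<Y<-q.$$ *)

From Stdlib Require Import Reals.
Open Scope R_scope.

Definition P_TS (q T S x : R) : R :=
  (T + S - 1) * x ^ 3
  + (1 - T - 2 * S + q * (S - 1 - T)) * x ^ 2
  + (S + q * (T - S)) * x.

Definition Xq (q T S : R) : R := (1 - q) * (T - 1) + q * S.
Definition Yq (q T S : R) : R := q * (T - 1) + (1 - q) * S.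

Definition exactly_three_roots_01 (f : R -> R) : Prop :=
  exists a b c : R,
    a <> b /\ a <> c /\ b <> c /\
    0 <= a <= 1 /\ 0 <= b <= 1 /\ 0 <= c <= 1 /\
    f a = 0 /\ f b = 0 /\ f c = 0 /\
    (forall x, 0 <= x <= 1 -> f x = 0 -> x = a \/ x = b \/ x = c).

From Stdlib Require Import Reals Lra Psatz.
Open Scope R_scope.

(* P_TS vanishes at 0, and P_TS(1) = -q <> 0.  On [0,1) the
   substitution t = x/(1-x), with inverse x = t/(1+t), is a bijection onto
   [0,+oo), and it factors the cubic as
       P_TS(x) = - x (1-x)^2 g(x/(1-x)),   g(t) = q t^2 + X t - (Y + q).
   Hence P_TS has exactly three roots in [0,1] (namely 0 and two interior
   ones) iff the quadratic g has two distinct positive roots.  By Vieta's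
   formulas a quadratic a t^2 + b t + c with a > 0 has two distinct positive
   roots iff b < 0, c > 0 and b^2 - 4ac > 0, which for g is exactly the
   stated condition on X and Y.
   The file first develops these facts about quadratics, then the
   substitution, then the factorization of P_TS and the reduction of
   "exactly three roots" to "two positive roots of g"; the theorem comes last. *)

Definition quad (a b c t : R) : R := a * t ^ 2 + b * t + c.

Lemma quad_vieta (a b c t1 t2 : R) :
  t1 <> t2 -> quad a b c t1 = 0 -> quad a b c t2 = 0 ->
  b = - a * (t1 + t2) /\ c = a * t1 * t2.
Proof.
  unfold quad; intros Hne H1 H2.
  assert (Hb : b = - a * (t1 + t2)).
  { assert (Hprod : (t1 - t2) * (a * (t1 + t2) + b) = 0) by nra.
    destruct (Rmult_integral _ _ Hprod); [exfalso; apply Hne|]; lra. }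
  split; [exact Hb|]. subst b. nra.
Qed.

Lemma quad_root_cases (a b c t1 t2 t : R) :
  a <> 0 -> t1 <> t2 -> quad a b c t1 = 0 -> quad a b c t2 = 0 ->
  quad a b c t = 0 -> t = t1 \/ t = t2.
Proof.
  intros Ha Hne H1 H2 Ht.
  destruct (quad_vieta a b c t1 t2 Hne H1 H2) as [Hb Hc].
  assert (Hfac : a * ((t - t1) * (t - t2)) = 0).
  { rewrite <- Ht; unfold quad; rewrite Hb, Hc; ring. }
  destruct (Rmult_integral _ _ Hfac) as [|Hfac']; [contradiction|].
  destruct (Rmult_integral _ _ Hfac'); [left|right]; lra.
Qed.

Lemma quad_two_positive_roots_iff (a b c : R) : 0 < a ->
  (exists t1 t2, 0 < t1 /\ 0 < t2 /\ t1 <> t2 /\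
                 quad a b c t1 = 0 /\ quad a b c t2 = 0) <->
  (b < 0 /\ 0 < c /\ 0 < b ^ 2 - 4 * a * c).
Proof.
  intros Ha; split.
  - intros (t1 & t2 & H1 & H2 & Hne & R1 & R2).
    destruct (quad_vieta a b c t1 t2 Hne R1 R2) as [Hb Hc].
    assert (Hgap : 0 < (t1 - t2) ^ 2).
    { rewrite <- Rsqr_pow2. apply Rsqr_pos_lt. lra. }
    subst b c. split; [|split].
    + assert (0 < a * (t1 + t2)) by (apply Rmult_lt_0_compat; lra). lra.
    + assert (0 < a * t1) by (apply Rmult_lt_0_compat; lra).
      apply Rmult_lt_0_compat; lra.
    + assert (0 < a ^ 2) by (apply pow_lt; lra).
      replace ((- a * (t1 + t2)) ^ 2 - 4 * a * (a * t1 * t2))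
        with (a ^ 2 * (t1 - t2) ^ 2) by ring.
      apply Rmult_lt_0_compat; assumption.
  - intros (Hb & Hc & Hd).
    (* completing the square *)
    assert (Hsq : forall t, quad a b c t
              = ((2 * a * t + b) ^ 2 - (b ^ 2 - 4 * a * c)) / (4 * a)).
    { intro t. unfold quad. field. lra. }
    set (s := sqrt (b ^ 2 - 4 * a * c)).
    assert (Hs2 : s * s = b ^ 2 - 4 * a * c) by (apply sqrt_sqrt; lra).
    assert (Hs0 : 0 < s) by (apply sqrt_lt_R0; lra).
    assert (Hsb : s < - b) by nra.
    exists ((- b + s) / (2 * a)), ((- b - s) / (2 * a)).
    repeat split.
    + apply Rdiv_lt_0_compat; lra.
    + apply Rdiv_lt_0_compat; lra.
    + intro E. unfold Rdiv in E. apply Rmult_eq_reg_r in E; [lra|].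
      apply Rinv_neq_0_compat; lra.
    + rewrite Hsq, <- Hs2.
      replace (2 * a * ((- b + s) / (2 * a)) + b) with s by (field; lra).
      field. lra.
    + rewrite Hsq, <- Hs2.
      replace (2 * a * ((- b - s) / (2 * a)) + b) with (- s) by (field; lra).
      field. lra.
Qed.

Definition to_unit (t : R) : R := t / (1 + t).
Definition to_half_line (x : R) : R := x / (1 - x).

Lemma to_unit_to_half_line (x : R) : x <> 1 -> to_unit (to_half_line x) = x.
Proof.
  intro Hx. unfold to_unit, to_half_line.
  assert (Hx' : 1 - x <> 0) by lra.
  replace (1 + x / (1 - x)) with (/ (1 - x)) by (field; exact Hx').
  field. exact Hx'.
Qed.

Lemma to_half_line_to_unit (t : R) : t <> -1 -> to_half_line (to_unit t) = t.
Proof.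
  intro Ht. unfold to_unit, to_half_line.
  assert (Ht' : 1 + t <> 0) by lra.
  replace (1 - t / (1 + t)) with (/ (1 + t)) by (field; exact Ht').
  field. exact Ht'.
Qed.

Lemma to_half_line_pos (x : R) : 0 < x < 1 -> 0 < to_half_line x.
Proof. intro Hx. unfold to_half_line. apply Rdiv_lt_0_compat; lra. Qed.

Lemma to_unit_range (t : R) : 0 < t -> 0 < to_unit t < 1.
Proof.
  intro Ht. unfold to_unit. split.
  - apply Rdiv_lt_0_compat; lra.
  - apply (Rmult_lt_reg_r (1 + t)); [lra|].
    replace (t / (1 + t) * (1 + t)) with t by (field; lra). lra.
Qed.

Definition assoc_quad (q T S : R) : R -> R :=
  quad q (Xq q T S) (- (Yq q T S + q)).

Lemma P_TS_zero (q T S : R) : P_TS q T S 0 = 0.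
Proof. unfold P_TS. ring. Qed.

Lemma P_TS_one (q T S : R) : P_TS q T S 1 = - q.
Proof. unfold P_TS. ring. Qed.

Lemma P_TS_factor (q T S x : R) : x <> 1 ->
  P_TS q T S x = - x * (1 - x) ^ 2 * assoc_quad q T S (to_half_line x).
Proof.
  intro Hx. unfold P_TS, assoc_quad, quad, to_half_line, Xq, Yq.
  field. intro E. apply Hx. lra.
Qed.

Lemma P_TS_interior_root_iff (q T S x : R) : 0 < x < 1 ->
  P_TS q T S x = 0 <-> assoc_quad q T S (to_half_line x) = 0.
Proof.
  intro Hx. rewrite P_TS_factor by lra.
  assert (Hc : - x * (1 - x) ^ 2 <> 0).
  { apply Rmult_integral_contrapositive_currified; [lra|].
    apply pow_nonzero. lra. }
  split; intro E.
  - destruct (Rmult_integral _ _ E); [contradiction | assumption].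
  - rewrite E. ring.
Qed.

Lemma P_TS_root_neq_one (q T S x : R) : q <> 0 -> P_TS q T S x = 0 -> x <> 1.
Proof. intros Hq Hx E. subst x. rewrite P_TS_one in Hx. lra. Qed.

Lemma interior_roots_to_quad (q T S u v : R) :
  0 < u < 1 -> 0 < v < 1 -> u <> v ->
  P_TS q T S u = 0 -> P_TS q T S v = 0 ->
  exists t1 t2, 0 < t1 /\ 0 < t2 /\ t1 <> t2 /\
                assoc_quad q T S t1 = 0 /\ assoc_quad q T S t2 = 0.
Proof.
  intros Hu Hv Huv Pu Pv.
  exists (to_half_line u), (to_half_line v).
  repeat split.
  - now apply to_half_line_pos.
  - now apply to_half_line_pos.
  - intro E. apply Huv.
    rewrite <- (to_unit_to_half_line u), <- (to_unit_to_half_line v) by lra.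
    now rewrite E.
  - now apply P_TS_interior_root_iff.
  - now apply P_TS_interior_root_iff.
Qed.

(* Of three distinct roots in [0,1], none is 1 and at most one is 0, so two
   of them are interior. *)
Lemma three_roots_to_quad (q T S : R) : q <> 0 ->
  exactly_three_roots_01 (P_TS q T S) ->
  exists t1 t2, 0 < t1 /\ 0 < t2 /\ t1 <> t2 /\
                assoc_quad q T S t1 = 0 /\ assoc_quad q T S t2 = 0.
Proof.
  intros Hq (a & b & c & Hab & Hac & Hbc & Ha & Hb & Hc & Pa & Pb & Pc & _).
  pose proof (P_TS_root_neq_one q T S a Hq Pa).
  pose proof (P_TS_root_neq_one q T S b Hq Pb).
  pose proof (P_TS_root_neq_one q T S c Hq Pc).
  destruct (Req_dec a 0); [apply (interior_roots_to_quad q T S b c); lra|].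
  destruct (Req_dec b 0); [apply (interior_roots_to_quad q T S a c); lra|].
  apply (interior_roots_to_quad q T S a b); lra.
Qed.

Lemma quad_to_three_roots (q T S t1 t2 : R) : q <> 0 ->
  0 < t1 -> 0 < t2 -> t1 <> t2 ->
  assoc_quad q T S t1 = 0 -> assoc_quad q T S t2 = 0 ->
  exactly_three_roots_01 (P_TS q T S).
Proof.
  intros Hq H1 H2 Hne G1 G2.
  pose proof (to_unit_range t1 H1) as U1.
  pose proof (to_unit_range t2 H2) as U2.
  assert (root_of_g : forall t, 0 < t -> assoc_quad q T S t = 0 ->
                      P_TS q T S (to_unit t) = 0).
  { intros t Ht Gt. apply P_TS_interior_root_iff; [now apply to_unit_range|].
    rewrite to_half_line_to_unit by lra. exact Gt. }
  exists 0, (to_unit t1), (to_unit t2).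
  repeat split; try lra.
  - intro E. apply Hne.
    rewrite <- (to_half_line_to_unit t1), <- (to_half_line_to_unit t2) by lra.
    now rewrite E.
  - apply P_TS_zero.
  - now apply root_of_g.
  - now apply root_of_g.
  - intros x Hx Px.
    pose proof (P_TS_root_neq_one q T S x Hq Px).
    destruct (Req_dec x 0) as [|Hx0]; [now left|right].
    apply P_TS_interior_root_iff in Px; [|lra].
    rewrite <- (to_unit_to_half_line x) by lra.
    destruct (quad_root_cases q _ _ t1 t2 _ Hq Hne G1 G2 Px) as [E|E];
      rewrite E; [left|right]; reflexivity.
Qed.

Lemma three_roots_iff_quad_two_positive_roots (q T S : R) : q <> 0 ->
  exactly_three_roots_01 (P_TS q T S) <->
  exists t1 t2, 0 < t1 /\ 0 < t2 /\ t1 <> t2 /\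
                assoc_quad q T S t1 = 0 /\ assoc_quad q T S t2 = 0.
Proof.
  intro Hq. split.
  - now apply three_roots_to_quad.
  - intros (t1 & t2 & H1 & H2 & Hne & G1 & G2).
    now apply (quad_to_three_roots q T S t1 t2).
Qed.

Lemma sign_conditions_iff (q X Y : R) : 0 < q ->
  (X < 0 /\ 0 < - (Y + q) /\ 0 < X ^ 2 - 4 * q * - (Y + q)) <->
  (X < 0 /\ - X ^ 2 / (4 * q) - q < Y /\ Y < - q).
Proof.
  intro Hq.
  assert (Hdisc : X ^ 2 - 4 * q * - (Y + q)
                  = 4 * q * (Y - (- X ^ 2 / (4 * q) - q))) by (field; lra).
  rewrite Hdisc. split.
  - intros (HX & HY & HD). repeat split; try lra.
    apply Rmult_lt_reg_l with (4 * q); lra.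
  - intros (HX & HY1 & HY2). repeat split; try lra.
    apply Rmult_lt_0_compat; lra.
Qed.

Theorem mainTheorem6 (q T S : R) (hq : 0 < q < 1 / 2) :
  exactly_three_roots_01 (P_TS q T S) <->
  (Xq q T S < 0 /\
   - (Xq q T S) ^ 2 / (4 * q) - q < Yq q T S /\ Yq q T S < - q).
Proof.
  rewrite three_roots_iff_quad_two_positive_roots by lra.
  unfold assoc_quad.
  rewrite quad_two_positive_roots_iff by lra.
  apply sign_conditions_iff. lra.
Qed.
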